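(* Assume that $(XX^T)^{-1}$ and $(X\Sigma^{-1}X^T)^{-1}$ exist with probability $1$ and that their expectations over $X$ exist. Then $b^w_l\le b^w_u$ and $v^w_l\ge v^w_u$.
   Context: Let $p>n$. The rows $x_1,\dots,x_n$ of $X\in\mathbb{R}^{n\times p}$ are i.i.d. from a distribution $P_x$ on $\mathbb{R}^p$ with $\mathbb{E}[x]=0$ and positive definite covariance $\Sigma=\mathrm{Var}(x)$, which is known. The responses are $Y=Xw+\epsilon$, where: - $w\in\mathbb{R}^p$ is random, independent of $X$, with $\mathbb{E}[w]=0$ and $\mathbb{E}[ww^T]=\tau^2I_p$; - $\epsilon\in\mathbb{R}^n$ has i.i.d. mean-zero entries of variance $\sigma^2$, independent of $(X,w)$. Define: - $b^w_l=\mathrm{tr}\big(\Sigma-\Sigma\mathbb{E}_X[X^T(XX^T)^{-1}X]\big)$; - $v^w_l=\mathrm{tr}\big(\Sigma\mathbb{E}_X[X^T(XX^T)^{-2}X]\big)$; - $b^w_u=\mathrm{tr}\big(\Sigma-\mathbb{E}_X[X^T(X\Sigma^{-1}X^T)^{-1}X]\big)$; - $v^w_u=\mathrm{tr}\big(\mathbb{E}_X[(X\Sigma^{-1}X^T)^{-1}]\big)$. These are the bias and variance coefficients (bias $\tau^2b$, variance $\sigma^2v$) of the reducible errors of, respectively, the minimum-norm interpolator $\hat w=X^T(XX^T)^{-1}Y$ and the minimum-variance interpolator $\tilde w=\Sigma^{-1}X^T(X\Sigma^{-1}X^T)^{-1}Y$. *)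

From HB Require Import structures.
From mathcomp Require Import all_boot all_order all_algebra.
From mathcomp Require Import all_classical all_reals all_analysis.
Set Implicit Arguments. Unset Strict Implicit. Unset Printing Implicit Defensive.
Import Order.TTheory GRing.Theory Num.Theory.
Local Open Scope classical_set_scope.
Local Open Scope ring_scope.

Section Defs.
Context {R : realType} {d : measure_display} {T : measurableType d}.

Definition Ex (P : probability T R) (f : T -> R) : R := Rintegral P setT f.

Definition Emx (P : probability T R) (a b : nat) (F : T -> 'M[R]_(a, b))
  : 'M[R]_(a, b) := \matrix_(i, j) Ex P (fun t => F t i j).

Definition integrableR (P : probability T R) (f : T -> R) : Prop :=
  P.-integrable setT (fun t => (f t)%:E).

(* The rows x_1..x_n of X are mutually independent random vectors:
   product rule on all (Borel) rectangles, which form a pi-system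
   generating the product sigma-algebra of R^p. *)
Definition rows_independent (P : probability T R) (n p : nat)
  (X : T -> 'M[R]_(n, p)) : Prop :=
  forall B : 'I_n -> 'I_p -> set R, (forall i j, measurable (B i j)) ->
    fine (P [set t | forall i j, B i j (X t i j)]) =
    \prod_(i < n) fine (P [set t | forall j, B i j (X t i j)]).

Definition rows_identically_distributed (P : probability T R) (n p : nat)
  (X : T -> 'M[R]_(n, p)) : Prop :=
  forall (i i' : 'I_n) (B : 'I_p -> set R), (forall j, measurable (B j)) ->
    P [set t | forall j, B j (X t i j)] = P [set t | forall j, B j (X t i' j)].

Definition posdef (p : nat) (S : 'M[R]_p) : Prop :=
  S^T = S /\ forall v : 'rV[R]_p, v != 0 -> 0 < (v *m S *m v^T) 0 0.

Definition bwl (P : probability T R) n p (S : 'M[R]_p) (X : T -> 'M[R]_(n, p)) : R :=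
  \tr (S - S *m Emx P (fun t => (X t)^T *m invmx (X t *m (X t)^T) *m X t)).
Definition vwl (P : probability T R) n p (S : 'M[R]_p) (X : T -> 'M[R]_(n, p)) : R :=
  \tr (S *m Emx P (fun t => (X t)^T *m (invmx (X t *m (X t)^T)) ^+ 2 *m X t)).
Definition bwu (P : probability T R) n p (S : 'M[R]_p) (X : T -> 'M[R]_(n, p)) : R :=
  \tr (S - Emx P (fun t => (X t)^T *m invmx (X t *m invmx S *m (X t)^T) *m X t)).
Definition vwu (P : probability T R) n p (S : 'M[R]_p) (X : T -> 'M[R]_(n, p)) : R :=
  \tr (Emx P (fun t => invmx (X t *m invmx S *m (X t)^T))).

End Defs.

(* Fix a realisation M of X with M M^T and M S^-1 M^T invertible.  Both
   B = M^T (M M^T)^-1 and D = S^-1 M^T (M S^-1 M^T)^-1 are right inverses of M,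
   and D minimises the S-weighted Gram form among right inverses:
   B^T S B = (B - D)^T S (B - D) + (M S^-1 M^T)^-1.  Taking traces gives the
   variance inequality for this realisation; since B M is an orthogonal
   projection, tr (S B M) = tr (M^T B^T S B M), and conjugating the
   decomposition by M gives the bias inequality.  Both pass to expectations by
   monotonicity of the integral, the averaged entries being dominated by
   constants or by tr (M M^T)^-1. *)

From HB Require Import structures.
From mathcomp Require Import all_boot all_order all_algebra.
From mathcomp Require Import all_classical all_reals all_analysis.
From mathcomp Require Import measurable_realfun.
From mathcomp Require Import lra.
Set Implicit Arguments. Unset Strict Implicit. Unset Printing Implicit Defensive.
Import Order.TTheory GRing.Theory Num.Theory.
Local Open Scope classical_set_scope.
Local Open Scope ring_scope.

Section GramBounds.
Context {R : realFieldType}.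

Lemma diag_le_mxtrace n (F : 'M[R]_n) j : (forall i, 0 <= F i i) -> F j j <= \tr F.
Proof. by move=> F_ge0; rewrite /mxtrace (bigD1 j) //= lerDl sumr_ge0. Qed.

Lemma gram_diag_ge0 m n (B : 'M[R]_(m, n)) j : 0 <= (B *m B^T) j j.
Proof. by rewrite mxE sumr_ge0 // => a _; rewrite mxE -expr2 sqr_ge0. Qed.

Lemma gram_entry_le m n (B : 'M[R]_(m, n)) k j :
  `|(B *m B^T) k j| <= ((B *m B^T) k k + (B *m B^T) j j) / 2.
Proof.
rewrite !mxE -big_split /= mulr_suml.
apply: le_trans (ler_norm_sum _ _ _) _; apply: ler_sum => a _; rewrite !mxE.
set x := B k a; set y := B j a.
have := sqr_ge0 (`|x| - `|y|).
rewrite sqrrB !real_normK ?num_real // normrM !expr2; lra.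
Qed.

Lemma gram_entry_le_mxtrace m n (B : 'M[R]_(m, n)) k j :
  `|(B *m B^T) k j| <= \tr (B *m B^T).
Proof.
have := gram_entry_le B k j.
have := diag_le_mxtrace k (@gram_diag_ge0 _ _ B).
have := diag_le_mxtrace j (@gram_diag_ge0 _ _ B); lra.
Qed.

Lemma sym_idempotent_entry_le1 n (Q : 'M[R]_n) k j :
  Q^T = Q -> Q *m Q = Q -> `|Q k j| <= 1.
Proof.
move=> QT QQ.
have gramQ : Q = Q *m Q^T by rewrite QT QQ.
have diag_le1 i : Q i i <= 1.
  have Qii_ge0 : 0 <= Q i i by rewrite gramQ gram_diag_ge0.
  have : Q i i ^+ 2 <= Q i i.
    rewrite {2}gramQ mxE (bigD1 i) //= mxE -expr2 lerDl.
    by rewrite sumr_ge0 // => a _; rewrite mxE -expr2 sqr_ge0.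
  rewrite expr2; nra.
have := gram_entry_le Q k j; rewrite -gramQ.
have := diag_le1 k; have := diag_le1 j; lra.
Qed.

Lemma mxtrace_mul_le n (S Q : 'M[R]_n) : (forall a b, `|Q a b| <= 1) ->
  \tr (S *m Q) <= \sum_i \sum_a `|S i a|.
Proof.
move=> Q_le1; apply: ler_sum => i _; rewrite mxE.
apply: ler_sum => a _; apply: le_trans (ler_norm _) _.
by rewrite normrM ler_piMr.
Qed.

End GramBounds.

Section PosDef.
Context {R : realType} {p : nat} {S : 'M[R]_p}.
Hypothesis S_posdef : posdef S.

Lemma posdef_unitmx : S \in unitmx.
Proof.
have [_ form_gt0] := S_posdef.
rewrite -row_free_unit -kermx_eq0; apply/eqP/row_matrixP => i; rewrite row0.
apply/eqP/negPn/negP => /form_gt0.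
by rewrite -row_mul mulmx_ker row0 mul0mx mxE ltxx.
Qed.

Lemma posdef_form_ge0 (v : 'rV_p) : 0 <= (v *m S *m v^T) 0 0.
Proof.
have [-> | v_neq0] := eqVneq v 0; first by rewrite !mul0mx mxE.
exact/ltW/S_posdef.2.
Qed.

Lemma posdef_congr_diag_ge0 m (E : 'M[R]_(p, m)) j : 0 <= (E^T *m S *m E) j j.
Proof.
have -> : (E^T *m S *m E) j j = (row j E^T *m S *m (row j E^T)^T) 0 0.
  by rewrite tr_row trmxK -row_mul !mxE; apply: eq_bigr => k _; rewrite !mxE.
exact: posdef_form_ge0.
Qed.

Lemma posdef_congr_mxtrace_ge0 m (E : 'M[R]_(p, m)) : 0 <= \tr (E^T *m S *m E).
Proof. by apply: sumr_ge0 => j _; apply: posdef_congr_diag_ge0. Qed.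

Lemma trmx_invmx_posdef : (invmx S)^T = invmx S.
Proof. by rewrite trmx_inv S_posdef.1. Qed.

End PosDef.

Section MinVarianceRightInverse.
Context {R : realType} {n p : nat} (S : 'M[R]_p) (M : 'M[R]_(n, p)).
Hypotheses (S_posdef : posdef S) (MSM_unit : M *m invmx S *m M^T \in unitmx).

Let A := invmx (M *m invmx S *m M^T).
Let D := invmx S *m M^T *m A.

Lemma trmx_invmx_weighted_gram : A^T = A.
Proof. by rewrite trmx_inv !trmx_mul trmxK (trmx_invmx_posdef S_posdef) mulmxA. Qed.

Lemma mulmx_minvar_rinv : M *m D = 1%:M.
Proof. by rewrite !mulmxA mulmxV. Qed.

Lemma minvar_rinv_form : D^T *m S *m D = A.
Proof.
rewrite !trmx_mul trmxK (trmx_invmx_posdef S_posdef) trmx_invmx_weighted_gram.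
rewrite -!mulmxA (mulmxA (invmx S) S) mulVmx ?(posdef_unitmx S_posdef) // mul1mx.
by rewrite mulmx_minvar_rinv mulmx1.
Qed.

Lemma rinv_form_decomp B : M *m B = 1%:M ->
  B^T *m S *m B = (B - D)^T *m S *m (B - D) + A.
Proof.
move=> MB; have [C MC ->] : exists2 C, M *m C = 0 & B = C + D.
  by exists (B - D); rewrite ?subrK // mulmxBr MB mulmx_minvar_rinv subrr.
(* S D = M^T A, so the cross terms reduce to (M C)^T A = 0. *)
have CSD : C^T *m S *m D = 0.
  rewrite /D !mulmxA -(mulmxA _ S) mulmxV ?(posdef_unitmx S_posdef) // mulmx1.
  by rewrite -trmx_mul MC trmx0 !mul0mx.
have DSC : D^T *m S *m C = 0.
  by rewrite -[LHS]trmxK trmx_mul (trmx_mul D^T S) trmxK S_posdef.1 mulmxA CSD trmx0.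
rewrite addrK (raddfD (@trmx _ _ _)) !mulmxDl !mulmxDr CSD DSC minvar_rinv_form.
by rewrite addr0 add0r.
Qed.

Lemma mxtrace_rinv_form_ge B : M *m B = 1%:M -> \tr A <= \tr (B^T *m S *m B).
Proof.
by move=> MB; rewrite rinv_form_decomp // mxtraceD lerDr posdef_congr_mxtrace_ge0.
Qed.

Lemma mxtrace_rinv_form_proj_ge B : M *m B = 1%:M ->
  \tr (M^T *m A *m M) <= \tr (M^T *m (B^T *m S *m B) *m M).
Proof.
move=> MB; rewrite rinv_form_decomp // mulmxDr mulmxDl mxtraceD lerDr.
have -> : M^T *m ((B - D)^T *m S *m (B - D)) *m M =
          ((B - D) *m M)^T *m S *m ((B - D) *m M) by rewrite trmx_mul !mulmxA.
exact: posdef_congr_mxtrace_ge0.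
Qed.

Lemma minvar_proj_diag_ge0 j : 0 <= (M^T *m A *m M) j j.
Proof.
rewrite -minvar_rinv_form.
have -> : M^T *m (D^T *m S *m D) *m M = (D *m M)^T *m S *m (D *m M).
  by rewrite (trmx_mul D M) !mulmxA.
exact: posdef_congr_diag_ge0.
Qed.

End MinVarianceRightInverse.

Section MinNormRightInverse.
Context {R : realType} {n p : nat} (S : 'M[R]_p) (M : 'M[R]_(n, p)).
Hypotheses (S_posdef : posdef S) (MM_unit : M *m M^T \in unitmx)
  (MSM_unit : M *m invmx S *m M^T \in unitmx).

Let W := invmx (M *m M^T).
Let B := M^T *m W.
Let A := invmx (M *m invmx S *m M^T).

Lemma trmx_invmx_gram : W^T = W.
Proof. by rewrite trmx_inv trmx_mul trmxK. Qed.

Lemma mulmx_minnorm_rinv : M *m B = 1%:M.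
Proof. by rewrite mulmxA mulmxV. Qed.

Lemma minnorm_proj_sym : (M^T *m W *m M)^T = M^T *m W *m M.
Proof. by rewrite !trmx_mul trmxK trmx_invmx_gram mulmxA. Qed.

Lemma minnorm_proj_idem : (M^T *m W *m M) *m (M^T *m W *m M) = M^T *m W *m M.
Proof. by rewrite mulmxA -(mulmxA _ M) mulmx_minnorm_rinv mulmx1. Qed.

Lemma minnorm_proj_entry_le1 k j : `|(M^T *m W *m M) k j| <= 1.
Proof.
exact: sym_idempotent_entry_le1 minnorm_proj_sym minnorm_proj_idem.
Qed.

Lemma minnorm_proj_sqr : M^T *m W ^+ 2 *m M = B *m B^T.
Proof. by rewrite (trmx_mul M^T W) trmx_invmx_gram trmxK expr2 -mulmxE !mulmxA. Qed.

Lemma minnorm_bias_le : \tr (M^T *m A *m M) <= \tr (S *m (M^T *m W *m M)).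
Proof.
have -> : \tr (S *m (M^T *m W *m M)) = \tr (M^T *m (B^T *m S *m B) *m M).
  rewrite -minnorm_proj_idem mulmxA mxtrace_mulC mulmxA -{1}minnorm_proj_sym.
  by rewrite (trmx_mul B M) !mulmxA.
exact/mxtrace_rinv_form_proj_ge/mulmx_minnorm_rinv.
Qed.

Lemma minnorm_var_le : \tr A <= \tr (S *m (M^T *m W ^+ 2 *m M)).
Proof.
rewrite minnorm_proj_sqr mulmxA mxtrace_mulC mulmxA.
exact/mxtrace_rinv_form_ge/mulmx_minnorm_rinv.
Qed.

Lemma minvar_proj_diag_le j : (M^T *m A *m M) j j <= \sum_i \sum_a `|S i a|.
Proof.
apply: le_trans (diag_le_mxtrace _ (minvar_proj_diag_ge0 S_posdef MSM_unit)) _.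
apply: le_trans minnorm_bias_le _.
exact/mxtrace_mul_le/minnorm_proj_entry_le1.
Qed.

Lemma minnorm_proj_sqr_entry_le k j : `|(M^T *m W ^+ 2 *m M) k j| <= \tr W.
Proof.
have <- : \tr (B *m B^T) = \tr W.
  rewrite mxtrace_mulC (trmx_mul M^T W) trmxK trmx_invmx_gram -mulmxA (mulmxA M).
  by rewrite mulmxV // mulmx1.
by rewrite minnorm_proj_sqr gram_entry_le_mxtrace.
Qed.

End MinNormRightInverse.

Section Expectation.
Context {R : realType} {d : measure_display} {T : measurableType d}.
Variable P : probability T R.

Lemma integrableR_measurable (f : T -> R) : integrableR P f -> measurable_fun setT f.
Proof. by move/(measurable_int P)/measurable_EFinP. Qed.

Lemma integrableR_le_ae (f g : T -> R) : measurable_fun setT f -> integrableR P g ->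
  {ae P, forall t, `|f t| <= g t} -> integrableR P f.
Proof.
move=> f_meas /integrableP[g_meas g_fin] f_le_g; apply/integrableP; split.
  exact/measurable_EFinP.
apply: le_lt_trans g_fin; apply: ae_ge0_le_integral => //.
- by apply: measurableT_comp => //; exact/measurable_EFinP.
- exact: measurableT_comp.
- apply: filterS f_le_g => t f_le_gt _ /=.
  by rewrite lee_fin (le_trans f_le_gt) ?ler_norm.
Qed.

Lemma integrableR_cst (c : R) : integrableR P (fun _ => c).
Proof. exact: finite_measure_integrable_cst. Qed.

Lemma integrableR_sum I (s : seq I) (f : I -> T -> R) :
  (forall i, integrableR P (f i)) -> integrableR P (fun t => \sum_(i <- s) f i t).
Proof.
move=> f_int.
apply: eq_integrable measurableT _ _ _
  (integrable_sum measurableT s (fun i _ => f_int i)).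
by move=> t _; rewrite sumEFin.
Qed.

Lemma integrableR_mull (c : R) (f : T -> R) :
  integrableR P f -> integrableR P (fun t => c * f t).
Proof.
by move=> f_int; apply: eq_integrable measurableT _ _ _ (integrableZl measurableT c f_int).
Qed.

Lemma Ex_sum I (s : seq I) (f : I -> T -> R) : (forall i, integrableR P (f i)) ->
  Ex P (fun t => \sum_(i <- s) f i t) = \sum_(i <- s) Ex P (f i).
Proof.
move=> f_int; rewrite /Ex /Rintegral.
under eq_integral do rewrite -sumEFin.
rewrite integral_sum // -EFin_sum_fine // => i _.
exact: integrable_fin_num (f_int i).
Qed.

Lemma Ex_mull (c : R) (f : T -> R) :
  integrableR P f -> Ex P (fun t => c * f t) = c * Ex P f.
Proof. by move=> f_int; rewrite /Ex RintegralZl. Qed.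

Lemma Ex_ge0_ae (f : T -> R) : measurable_fun setT f -> {ae P, forall t, 0 <= f t} ->
  0 <= Ex P f.
Proof.
move=> f_meas f_ge0.
have -> : Ex P f = Ex P (fun t => Num.max (f t) 0).
  rewrite /Ex /Rintegral; congr fine; apply: ae_eq_integral => //.
  - exact/measurable_EFinP.
  - exact/measurable_EFinP/measurable_maxr.
  - by apply: filterS f_ge0 => t f_ge0t _; rewrite max_l.
by apply: Rintegral_ge0 => t _; rewrite le_max lexx orbT.
Qed.

Lemma Ex_le_ae (f g : T -> R) : integrableR P f -> integrableR P g ->
  {ae P, forall t, f t <= g t} -> Ex P f <= Ex P g.
Proof.
move=> f_int g_int f_le_g; rewrite -subr_ge0 /Ex -RintegralB //.
apply: Ex_ge0_ae.
  by apply: measurable_funB; apply: integrableR_measurable.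
by apply: filterS f_le_g => t; rewrite subr_ge0.
Qed.

Definition measurable_mx m k (F : T -> 'M[R]_(m, k)) :=
  forall i j, measurable_fun setT (fun t => F t i j).

Definition integrable_mx m k (F : T -> 'M[R]_(m, k)) :=
  forall i j, integrableR P (fun t => F t i j).

Lemma integrable_mx_measurable m k (F : T -> 'M[R]_(m, k)) :
  integrable_mx F -> measurable_mx F.
Proof. by move=> F_int i j; apply: integrableR_measurable. Qed.

Lemma measurable_mx_mul m k l (F : T -> 'M[R]_(m, k)) (G : T -> 'M[R]_(k, l)) :
  measurable_mx F -> measurable_mx G -> measurable_mx (fun t => F t *m G t).
Proof.
move=> F_meas G_meas i j.
have -> : (fun t => (F t *m G t) i j) = (fun t => \sum_a F t i a * G t a j).
  by apply/funext => t; rewrite mxE.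
by apply: measurable_sum => a; apply: measurable_funM.
Qed.

Lemma measurable_mx_trmx m k (F : T -> 'M[R]_(m, k)) :
  measurable_mx F -> measurable_mx (fun t => (F t)^T).
Proof.
move=> F_meas i j; rewrite (_ : (fun t => _) = fun t => F t j i) //.
by apply/funext => t; rewrite mxE.
Qed.

Lemma integrable_mx_mull m k (S : 'M[R]_m) (F : T -> 'M[R]_(m, k)) :
  integrable_mx F -> integrable_mx (fun t => S *m F t).
Proof.
move=> F_int i j.
have -> : (fun t => (S *m F t) i j) = (fun t => \sum_a S i a * F t a j).
  by apply/funext => t; rewrite mxE.
by apply: integrableR_sum => a; apply: integrableR_mull.
Qed.

Lemma mulmx_Emx m k (S : 'M[R]_m) (F : T -> 'M[R]_(m, k)) :
  integrable_mx F -> S *m Emx P F = Emx P (fun t => S *m F t).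
Proof.
move=> F_int; apply/matrixP => i j; rewrite !mxE.
under [in RHS]eq_fun do rewrite mxE.
rewrite Ex_sum => [|a]; last exact: integrableR_mull.
by apply: eq_bigr => a _; rewrite mxE Ex_mull.
Qed.

Lemma integrableR_mxtrace m (F : T -> 'M[R]_m) :
  (forall i, integrableR P (fun t => F t i i)) -> integrableR P (fun t => \tr (F t)).
Proof. exact: integrableR_sum. Qed.

Lemma mxtrace_Emx m (F : T -> 'M[R]_m) : (forall i, integrableR P (fun t => F t i i)) ->
  \tr (Emx P F) = Ex P (fun t => \tr (F t)).
Proof. by move=> F_int; rewrite Ex_sum //; apply: eq_bigr => i _; rewrite mxE. Qed.

Lemma le_mxtrace_Emx m k (S : 'M[R]_k) (F : T -> 'M[R]_m) (G : T -> 'M[R]_k) :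
  (forall i, integrableR P (fun t => F t i i)) -> integrable_mx G ->
  {ae P, forall t, \tr (F t) <= \tr (S *m G t)} ->
  \tr (Emx P F) <= \tr (S *m Emx P G).
Proof.
move=> F_int G_int F_le_G; have SG_int := integrable_mx_mull S G_int.
have SG_diag_int i : integrableR P (fun t => (S *m G t) i i) by apply: SG_int.
rewrite mulmx_Emx // !mxtrace_Emx //.
by apply: Ex_le_ae => //; apply: integrableR_mxtrace.
Qed.

End Expectation.

Section Interpolators.
Context {R : realType} {d : measure_display} {T : measurableType d}.
Variables (P : probability T R) (n p : nat) (X : T -> 'M[R]_(n, p)) (S : 'M[R]_p).
Hypotheses (S_posdef : posdef S) (X_meas : measurable_mx X).
Hypotheses (XX_unit : {ae P, forall t, X t *m (X t)^T \in unitmx})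
  (XSX_unit : {ae P, forall t, X t *m invmx S *m (X t)^T \in unitmx}).
Hypotheses (XX_inv_int : integrable_mx P (fun t => invmx (X t *m (X t)^T)))
  (XSX_inv_int : integrable_mx P (fun t => invmx (X t *m invmx S *m (X t)^T))).

Let measurable_congr (F : T -> 'M[R]_n) : measurable_mx F ->
  measurable_mx (fun t => (X t)^T *m F t *m X t).
Proof.
move=> F_meas; apply/measurable_mx_mul/X_meas.
exact/measurable_mx_mul/F_meas/measurable_mx_trmx.
Qed.

Let XX_inv_meas := integrable_mx_measurable XX_inv_int.

Lemma integrable_minnorm_proj :
  integrable_mx P (fun t => (X t)^T *m invmx (X t *m (X t)^T) *m X t).
Proof.
move=> k j.
apply: (integrableR_le_ae (measurable_congr XX_inv_meas k j) (integrableR_cst P 1)).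
by apply: filterS XX_unit => t XX_u; apply: minnorm_proj_entry_le1.
Qed.

Lemma integrable_minvar_proj_diag j :
  integrableR P (fun t => ((X t)^T *m invmx (X t *m invmx S *m (X t)^T) *m X t) j j).
Proof.
have F_meas := measurable_congr (integrable_mx_measurable XSX_inv_int) j j.
apply: (integrableR_le_ae F_meas (integrableR_cst P (\sum_i \sum_a `|S i a|))).
apply: filterS2 XX_unit XSX_unit => t XX_u XSX_u.
by rewrite ger0_norm ?minvar_proj_diag_ge0 ?minvar_proj_diag_le.
Qed.

Lemma integrable_minnorm_proj_sqr :
  integrable_mx P (fun t => (X t)^T *m invmx (X t *m (X t)^T) ^+ 2 *m X t).
Proof.
have sqr_meas : measurable_mx (fun t => invmx (X t *m (X t)^T) ^+ 2).
  rewrite (_ : (fun t => _) = fun t =>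
    invmx (X t *m (X t)^T) *m invmx (X t *m (X t)^T)).
    exact: measurable_mx_mul XX_inv_meas XX_inv_meas.
  by apply/funext => t; rewrite expr2 mulmxE.
move=> k j; apply: (integrableR_le_ae (measurable_congr sqr_meas k j)
  (integrableR_mxtrace (fun i => XX_inv_int i i))).
by apply: filterS XX_unit => t XX_u; apply: minnorm_proj_sqr_entry_le.
Qed.

End Interpolators.

Theorem proposition4 (R : realType) (d : measure_display) (T : measurableType d)
  (P : probability T R) (n p : nat) (X : T -> 'M[R]_(n, p)) (Sigma : 'M[R]_p) :
  (n < p)%N ->
  (* rows are random vectors (measurable entries) *)
  (forall i j, measurable_fun setT (fun t => X t i j)) ->
  (* rows i.i.d. *)
  rows_independent P X ->
  rows_identically_distributed P X ->
  (* E[x] = 0 *)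
  (forall i j, integrableR P (fun t => X t i j) /\ Ex P (fun t => X t i j) = 0) ->
  (* Var(x) = Sigma (finite second moments) *)
  (forall i j k, integrableR P (fun t => X t i j * X t i k) /\
                 Ex P (fun t => X t i j * X t i k) = Sigma j k) ->
  posdef Sigma ->
  (* the inverses exist with probability 1 *)
  {ae P, forall t, X t *m (X t)^T \in unitmx} ->
  {ae P, forall t, X t *m invmx Sigma *m (X t)^T \in unitmx} ->
  (* their expectations exist *)
  (forall i j, integrableR P (fun t => invmx (X t *m (X t)^T) i j)) ->
  (forall i j, integrableR P (fun t => invmx (X t *m invmx Sigma *m (X t)^T) i j)) ->
  bwl P Sigma X <= bwu P Sigma X /\ vwu P Sigma X <= vwl P Sigma X.
Proof.
move=> _ X_meas _ _ _ _ S_posdef XX_unit XSX_unit XX_inv_int XSX_inv_int.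
split.
- rewrite /bwl /bwu !linearB /= lerD2l lerN2.
  apply: le_mxtrace_Emx.
  + exact: integrable_minvar_proj_diag.
  + exact: integrable_minnorm_proj.
  + by apply: filterS2 XX_unit XSX_unit => t XX_u XSX_u; apply: minnorm_bias_le.
- rewrite /vwu /vwl; apply: le_mxtrace_Emx.
  + by move=> i; apply: XSX_inv_int.
  + exact: integrable_minnorm_proj_sqr.
  + by apply: filterS2 XX_unit XSX_unit => t XX_u XSX_u; apply: minnorm_var_le.
Qed.
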